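(* Let $P\in\{1,2\}$, $t\in W^P_{i,k}$, let $i'$ be the least $P$-losing number and $\ell$ some $P$-losing number, and let $(\theta_{i'},\theta_{i'+2},\ldots,\theta_\ell)$ be a tuple of countable ordinals. Let $\Sigma_P$ be a partial strategy of $P$ in $\mathcal G(t)$ such that: (i) no node $u\in\Sigma_P$ has $t(u)=p_j$ with $j\le\ell$ or $t(u)=\sim$; (ii) every infinite branch all of whose prefixes lie in $\Sigma_P$ is won by $P$; (iii) for every node $u$ not reachable by $\Sigma_P$ we have $\sigma_P(t{\upharpoonright}u){\upharpoonright}\ell\le_{lex}(\theta_{i'},\ldots,\theta_\ell)$. Then $\sigma_P(t){\upharpoonright}\ell\le_{lex}(\theta_{i'},\ldots,\theta_\ell)$.
   Context: Fix natural numbers $i<k$. Trees over a ranked alphabet are partial maps $t:\omega^*\to A$ with non-empty prefix-closed domain where a node with an $m$-ary label has exactly the children $u0,\ldots,u(m-1)$; $t{\upharpoonright}u$ is the subtree at $u$. The alphabet $\tilde A_{i,k}$ has unary letters $p_i,\ldots,p_k$, a unary letter $\sim$, and binary letters $c_1,c_2$. Players $1,2$; $\bar P$ the opponent. Well-formed: no branch has infinitely many $\sim$. A node $u$ is switched if an odd number of strict prefixes $w\prec u$ have $t(w)=\sim$, kept otherwise. The game $\mathcal G(t)$: positions are nodes, moves to children, start at the root; $u$ is controlled by $P$ iff ($u$ kept and $t(u)=c_P$) or ($u$ switched and $t(u)=c_{\bar P}$). An infinite play is won by player 1 iff it is (eventually) kept and the least $j$ with infinitely many nodes labelled $p_j$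 is even, or (eventually) switched and this $j$ is odd (take $j=k$ if none occurs infinitely often). $W^P_{i,k}$ is the set of well-formed trees $t$ in which $P$ has a winning strategy. A partial strategy of $P$ is a prefix-closed set $\Sigma\subseteq\mathrm{dom}(t)$ containing the root in which every node has at least one child in $\Sigma$ and every node controlled by $P$ has exactly one child in $\Sigma$. A node $uc$ (child $c$ of $u$) is not reachable by $\Sigma$ if $u\in\Sigma$, $u$ has at least two children and is not controlled by $P$, and $uc\notin\Sigma$. $P$-losing numbers: $j\in\{i,\ldots,k\}$ odd for $P=1$, even for $P=2$; others in $\{i..k\}$ are $P$-winning; $i',k'$ least/largest $P$-losing. A $P$-signature is $\infty$ or a tuple $(\theta_{i'},\theta_{i'+2},\ldots,\theta_{k'})$ of countable ordinals, ordered lexicographically (smaller index more significant), $\infty$ largest; for $P$-losing $\ell$, $(\theta_{i'},\ldots,\theta_{k'}){\upharpoonright}\ell=(\theta_{i'},\ldots,\theta_\ell)$ and $\infty{\upharpoonright}\ell=\infty$. The maps $\sigma_P$ are the unique pointwise minimal pair assigning $P$-signatures to well-formed trees satisfying: (1) $\sigma_P(t)=\infty$ iff $P$ does not win $\mathcal G(t)$; (2) $\sigma_P(\sim(t))=(0,\ldots,0)$ if $P$ wins $\mathcal G(\sim(t))$; (3) for $\sigma_P(t)=(\theta_{i'},\ldots,\theta_{k'})$ and $P$-winning $j$: $\sigma_P(p_j(t))=(\theta_{i'},\ldots,\theta_{j-1},0,\ldots,0)$; (4) for $P$-losing $j$: $\sigma_P(p_j(t))=(\theta_{i'},\ldots,\theta_{j-2},\theta_j+1,0,\ldots,0)$;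 (5) $\sigma_P(c_P(t_L,t_R))=\min\{\sigma_P(t_L),\sigma_P(t_R)\}$; (6) $\sigma_P(c_{\bar P}(t_L,t_R))=\max\{\sigma_P(t_L),\sigma_P(t_R)\}$. *)

From mathcomp Require Import all_boot.
Set Implicit Arguments. Unset Strict Implicit. Unset Printing Implicit Defensive.

(* Countable ordinals, as Brouwer trees (Z, successor, sup of an       *)
(* omega-sequence) ordered by the standard inductive preorder.  Modulo *)
(* the induced equivalence [oeq], these are exactly the countable      *)
(* ordinals with their usual order.                                    *)
Inductive Ord : Type :=
| OZ : Ord
| OS : Ord -> Ord
| OL : (nat -> Ord) -> Ord.

Inductive ole : Ord -> Ord -> Prop :=
| ole_zero x : ole OZ x
| ole_trans x y z : ole x y -> ole y z -> ole x z
| ole_succ_mono x y : ole x y -> ole (OS x) (OS y)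
| ole_cocone x f n : ole x (f n) -> ole x (OL f)
| ole_limiting f x : (forall n, ole (f n) x) -> ole (OL f) x.

Definition olt (a b : Ord) : Prop := ole (OS a) b.
Definition oeq (a b : Ord) : Prop := ole a b /\ ole b a.

Inductive player := P1 | P2.
Definition opp (P : player) : player := match P with P1 => P2 | P2 => P1 end.

(* Pl j = p_j (unary), Sw = ~ (unary), C P = c_P (binary) *)
Inductive Lab := Pl of nat | Sw | C of player.

Definition arity (a : Lab) : nat :=
  match a with Pl _ => 1 | Sw => 1 | C _ => 2 end.

Definition tree := seq nat -> option Lab.

Definition is_tree (i k : nat) (t : tree) : Prop :=
  t [::] <> None /\
  (forall u c, t (rcons u c) <> None -> t u <> None) /\
  (forall u a, t u = Some a ->
     (forall j, a = Pl j -> i <= j <= k) /\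
     (forall c, t (rcons u c) <> None <-> c < arity a)).

Definition subtree (t : tree) (u : seq nat) : tree := fun w => t (u ++ w).

Definition mk1 (a : Lab) (t : tree) : tree := fun u =>
  match u with [::] => Some a | 0 :: w => t w | _ => None end.
Definition mk2 (a : Lab) (tl tr : tree) : tree := fun u =>
  match u with [::] => Some a | 0 :: w => tl w | 1 :: w => tr w | _ => None end.

(* infinite branches, given by their sequence of directions *)
Definition pref (b : nat -> nat) (n : nat) : seq nat := mkseq b n.
Definition is_branch (t : tree) (b : nat -> nat) : Prop :=
  forall n, t (pref b n) <> None.

Definition isSw (o : option Lab) : bool := if o is Some Sw then true else false.

Definition well_formed (t : tree) : Prop :=
  forall b, is_branch t b ->
    ~ (forall N, exists n, N <= n /\ t (pref b n) = Some Sw).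

Definition WFT (i k : nat) (t : tree) : Prop := is_tree i k t /\ well_formed t.

Definition switched (t : tree) (u : seq nat) : bool :=
  odd (count (fun n => isSw (t (take n u))) (iota 0 (size u))).

Definition controlled (t : tree) (P : player) (u : seq nat) : Prop :=
  (~~ switched t u /\ t u = Some (C P)) \/
  (switched t u /\ t u = Some (C (opp P))).

Definition inf_often (t : tree) (b : nat -> nat) (j : nat) : Prop :=
  forall N, exists n, N <= n /\ t (pref b n) = Some (Pl j).

Definition lim_prio (i k : nat) (t : tree) (b : nat -> nat) (m : nat) : Prop :=
  (i <= m <= k /\ inf_often t b m /\
     forall j, i <= j -> j < m -> ~ inf_often t b j) \/
  (m = k /\ forall j, i <= j <= k -> ~ inf_often t b j).

Definition win1 (i k : nat) (t : tree) (b : nat -> nat) : Prop :=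
  exists m, lim_prio i k t b m /\
    (((exists N, forall n, N <= n -> ~~ switched t (pref b n)) /\ ~~ odd m) \/
     ((exists N, forall n, N <= n -> switched t (pref b n)) /\ odd m)).

Definition won_by (i k : nat) (t : tree) (P : player) (b : nat -> nat) : Prop :=
  match P with P1 => win1 i k t b | P2 => ~ win1 i k t b end.

Definition P_wins (i k : nat) (P : player) (t : tree) : Prop :=
  exists S : seq nat -> Prop,
    S [::] /\
    (forall u c, S (rcons u c) -> S u) /\
    (forall u, S u -> t u <> None) /\
    (forall u, S u -> controlled t P u ->
       exists c, S (rcons u c) /\ forall c', S (rcons u c') -> c' = c) /\
    (forall u, S u -> ~ controlled t P u ->
       forall c, t (rcons u c) <> None -> S (rcons u c)) /\
    (forall b, (forall n, S (pref b n)) -> won_by i k t P b).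

Definition W (i k : nat) (P : player) (t : tree) : Prop :=
  WFT i k t /\ P_wins i k P t.

Definition partial_strategy (P : player) (t : tree) (S : seq nat -> Prop) : Prop :=
  S [::] /\
  (forall u c, S (rcons u c) -> S u) /\
  (forall u, S u -> t u <> None) /\
  (forall u, S u -> exists c, S (rcons u c)) /\
  (forall u, S u -> controlled t P u ->
     exists c, S (rcons u c) /\ forall c', S (rcons u c') -> c' = c).

Definition not_reachable (P : player) (t : tree) (S : seq nat -> Prop)
    (u : seq nat) (c : nat) : Prop :=
  S u /\ (exists Q, t u = Some (C Q)) /\ c < 2 /\ ~ controlled t P u /\
  ~ S (rcons u c).

Definition losing (i k : nat) (P : player) (j : nat) : bool :=
  (i <= j <= k) && (odd j == (if P is P1 then true else false)).

(* A P-signature: None = infinity, Some th = the tuple (th j) indexed by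
   the P-losing j (other values of th are irrelevant). *)
Definition sig := option (nat -> Ord).

Definition lex_le (L : nat -> bool) (a b : nat -> Ord) : Prop :=
  (forall j, L j -> oeq (a j) (b j)) \/
  (exists j, L j /\ olt (a j) (b j) /\
     forall m, L m -> m < j -> oeq (a m) (b m)).

Definition sig_le (i k : nat) (P : player) (s s' : sig) : Prop :=
  match s, s' with
  | _, None => True
  | None, Some _ => False
  | Some a, Some b => lex_le (losing i k P) a b
  end.

Definition sig_eq (i k : nat) (P : player) (s s' : sig) : Prop :=
  match s, s' with
  | None, None => True
  | Some a, Some b => forall j, losing i k P j -> oeq (a j) (b j)
  | _, _ => False
  end.

Definition zeros : nat -> Ord := fun _ => OZ.

Definition sig_min i k P (s a b : sig) : Prop :=
  (sig_le i k P a b /\ sig_eq i k P s a) \/ (sig_le i k P b a /\ sig_eq i k P s b).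
Definition sig_max i k P (s a b : sig) : Prop :=
  (sig_le i k P a b /\ sig_eq i k P s b) \/ (sig_le i k P b a /\ sig_eq i k P s a).

Definition sig_conditions (i k : nat) (P : player) (sg : tree -> sig) : Prop :=
  (forall t, WFT i k t -> (sg t = None <-> ~ P_wins i k P t)) /\
  (forall t, WFT i k t -> P_wins i k P (mk1 Sw t) ->
     sig_eq i k P (sg (mk1 Sw t)) (Some zeros)) /\
  (forall t j th, WFT i k t -> i <= j <= k -> ~~ losing i k P j ->
     sg t = Some th ->
     sig_eq i k P (sg (mk1 (Pl j) t))
       (Some (fun m => if m < j then th m else OZ))) /\
  (forall t j th, WFT i k t -> losing i k P j ->
     sg t = Some th ->
     sig_eq i k P (sg (mk1 (Pl j) t))
       (Some (fun m => if m < j then th m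
                       else if m == j then OS (th j) else OZ))) /\
  (forall tl tr, WFT i k tl -> WFT i k tr ->
     sig_min i k P (sg (mk2 (C P) tl tr)) (sg tl) (sg tr)) /\
  (forall tl tr, WFT i k tl -> WFT i k tr ->
     sig_max i k P (sg (mk2 (C (opp P)) tl tr)) (sg tl) (sg tr)).

Definition is_sigma (i k : nat) (P : player) (sg : tree -> sig) : Prop :=
  sig_conditions i k P sg /\
  forall sg', sig_conditions i k P sg' ->
    forall t, WFT i k t -> sig_le i k P (sg t) (sg' t).

Definition sig_restr_le (i k : nat) (P : player) (l : nat) (s : sig)
    (th : nat -> Ord) : Prop :=
  match s with
  | None => False
  | Some a => lex_le (fun m => losing i k P m && (m <= l)) a th
  end.

(* sigma_P is the least solution of (1)-(6), so by Knaster-Tarski it lies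
   below every prefixed point of the operator computing the signature of a node
   from those of its children.  We build a prefixed point which at every node
   u of Sigma_P is at most the tuple that agrees with theta on the coordinates
   <= l and is an ordinal rank on each P-losing coordinate m > l.  The rank is
   taken in the relation "v descends from u inside Sigma_P and the least
   priority met on the way is m"; it is well founded because an infinite
   descent would be a branch of Sigma_P lost by P, against (ii).  The ranks
   exceed the signatures at the nodes not reachable by Sigma_P, which by (iii)
   accounts for leaving Sigma_P, and a label p_j with j > l only increases the
   j-th coordinate where the rank strictly drops.  The candidate is defined
   along Sigma_P because P wins from each of its nodes: follow Sigma_P and,
   after leaving it, a winning strategy that exists by (iii). *)

From mathcomp Require Import all_boot zify.
From Stdlib Require Import Classical ClassicalEpsilon FunctionalExtensionality.
Set Implicit Arguments. Unset Strict Implicit. Unset Printing Implicit Defensive.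

(** * Countable ordinals *)

(* [ole] contains a transitivity rule, so it cannot be inverted directly;
   [ole_rec] is an equivalent relation defined by structural recursion. *)
Fixpoint below (Q : Ord -> Prop) (y : Ord) : Prop :=
  match y with OZ => False | OS y' => Q y' | OL g => exists n, below Q (g n) end.

Fixpoint ole_rec (x : Ord) : Ord -> Prop :=
  match x with
  | OZ => fun _ => True
  | OS x' => below (ole_rec x')
  | OL f => fun y => forall n, ole_rec (f n) y
  end.

Lemma below_mono (Q Q' : Ord -> Prop) y :
  (forall z, Q z -> Q' z) -> below Q y -> below Q' y.
Proof.
move=> QQ'; elim: y => //= [y _|g IH]; first exact: QQ'.
by case=> n /IH; exists n.
Qed.

Lemma ole_rec_cocone g n x : ole_rec x (g n) -> ole_rec x (OL g).
Proof. elim: x => //= [x _|f IH] H; [by exists n | by move=> m; apply: IH]. Qed.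

Lemma ole_rec_trans x y z : ole_rec x y -> ole_rec y z -> ole_rec x z.
Proof.
elim: x y z => //= [x IH|f IH] y z; last by move=> Hxy Hyz n; apply: IH (Hxy n) Hyz.
elim: y z => //= [y _|g IHg] z.
- by move=> Hxy; apply: below_mono => w; apply: IH Hxy.
- by move=> [n Hn] Hgz; apply: IHg (Hgz n).
Qed.

Lemma ole_refl x : ole x x.
Proof.
elim: x => [|x IH|f IH]; constructor => //.
by move=> n; apply: (@ole_cocone _ _ n).
Qed.

Lemma ole_recP x y : ole x y <-> ole_rec x y.
Proof.
split.
- elim=> //= {x y} [x y z _ Hxy _ Hyz|x f n _ H].
  + exact: ole_rec_trans Hxy Hyz.
  + exact: ole_rec_cocone H.
- elim: x y => [|x IH|f IH] y /=; first by constructor.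
  + elim: y => //= [y _ /IH|g IHg [n /IHg]]; first exact: ole_succ_mono.
    exact: ole_cocone.
  + by move=> H; apply: ole_limiting => n; apply: IH.
Qed.

Lemma ole_succ_zero x : ~ ole (OS x) OZ.
Proof. by move/ole_recP. Qed.

Lemma ole_succ_inv x y : ole (OS x) (OS y) -> ole x y.
Proof. by move/ole_recP => /= /ole_recP. Qed.

Lemma ole_succ_lim_inv x g : ole (OS x) (OL g) -> exists n, ole (OS x) (g n).
Proof. by move/ole_recP => /= [n Hn]; exists n; apply/(@ole_recP (OS x)). Qed.

Lemma ole_succr x : ole x (OS x).
Proof.
elim: x => [|x IH|f IH]; constructor => // n.
apply: ole_trans (IH n) _; apply: ole_succ_mono; apply: ole_cocone; exact: ole_refl.
Qed.

Lemma olt_ole a b : olt a b -> ole a b.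
Proof. exact: ole_trans (ole_succr a). Qed.

Lemma olt_ole_trans a b c : olt a b -> ole b c -> olt a c.
Proof. exact: ole_trans. Qed.

Lemma olt_wf : well_founded olt.
Proof.
suff acc_below y x : ole x y -> Acc olt x by move=> x; apply: acc_below (ole_refl x).
elim: y x => [|y IH|g IH] x Hxy; constructor => z /ole_trans/(_ Hxy) Hz.
- by case: (ole_succ_zero Hz).
- exact/IH/ole_succ_inv.
- case: (ole_succ_lim_inv Hz) => n Hn; apply: (IH n); exact: olt_ole.
Qed.

Lemma olt_irrefl a : ~ olt a a.
Proof. by elim/(well_founded_ind olt_wf): a => a IH H; apply: (IH a H H). Qed.

Lemma olt_nle a b : olt a b -> ~ ole b a.
Proof. by move=> Hab Hba; apply: (olt_irrefl (olt_ole_trans Hab Hba)). Qed.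

Lemma ole_total x y : ole x y \/ olt y x.
Proof.
rewrite /olt; elim: x y => [|x IH|f IH] y; first by left; constructor.
- elim: y => [|y _|g IHg].
  + by right; apply: ole_succ_mono; constructor.
  + by case: (IH y) => H; [left|right]; apply: ole_succ_mono.
  + case: (classic (exists n, ole (OS x) (g n))) => [[n Hn]|Hn].
      by left; apply: ole_cocone Hn.
    right; apply: ole_succ_mono; apply: ole_limiting => n.
    case: (IHg n) => [H|]; [by case: Hn; exists n | exact: ole_succ_inv].
- case: (classic (exists n, ~ ole (f n) y)) => [[n Hn]|Hn].
  + right; case: (IH n y) => // H; apply: ole_trans H _.
    apply: ole_cocone; exact: ole_refl.
  + by left; apply: ole_limiting => n; apply: NNPP => H; apply: Hn; exists n.
Qed.

Lemma nle_olt a b : ~ ole a b -> olt b a.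
Proof. by case: (ole_total a b). Qed.

Lemma ord_least (B : Ord -> Prop) x :
  B x -> exists m, B m /\ forall y, B y -> ole m y.
Proof.
elim/(well_founded_ind olt_wf): x => x IH Bx.
case: (classic (exists y, B y /\ ~ ole x y)) => [[y [By /nle_olt Hyx]]|H].
- exact: IH Hyx By.
- by exists x; split => // y By; apply: NNPP => Hxy; apply: H; exists y.
Qed.

Lemma oeq_refl a : oeq a a. Proof. split; exact: ole_refl. Qed.
Lemma oeq_sym a b : oeq a b -> oeq b a. Proof. by case. Qed.
Lemma oeq_trans a b c : oeq a b -> oeq b c -> oeq a c.
Proof. by move=> [? ?] [? ?]; split; apply: ole_trans; eassumption. Qed.

(** * Lexicographic comparison of ordinal tuples *)

Lemma ex_least (Q : nat -> Prop) :
  (exists n, Q n) -> exists n, Q n /\ forall m, m < n -> ~ Q m.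
Proof.
move=> [n]; elim/ltn_ind: n => n IH Qn.
case: (classic (exists m, m < n /\ Q m)) => [[m [mn Qm]]|H]; first exact: IH mn Qm.
by exists n; split => // m mn Qm; apply: H; exists m.
Qed.

Section Lex.
Variable L : nat -> bool.

Definition agree_below (a b : nat -> Ord) (j : nat) : Prop :=
  forall m, L m -> m < j -> oeq (a m) (b m).

(* Equivalent to [lex_le L] (lemma [lex_leP]); as it avoids the case split on
   the first difference, transitivity and monotonicity become local. *)
Definition lexle (a b : nat -> Ord) : Prop :=
  forall j, L j -> agree_below a b j -> ole (a j) (b j).

Lemma agree_below_sym a b j : agree_below a b j -> agree_below b a j.
Proof. by move=> Hab m Lm mj; apply/oeq_sym/Hab. Qed.

Lemma agree_below_trans a b c j :
  agree_below a b j -> agree_below b c j -> agree_below a c j.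
Proof. by move=> Hab Hbc m Lm mj; apply: oeq_trans (Hab m Lm mj) (Hbc m Lm mj). Qed.

Lemma lexle_refl a : lexle a a.
Proof. by move=> j _ _; apply: ole_refl. Qed.

Lemma lexle_pointwise a b : (forall j, L j -> ole (a j) (b j)) -> lexle a b.
Proof. by move=> H j Lj _; apply: H. Qed.

Lemma lexle0 a : lexle zeros a.
Proof. by apply: lexle_pointwise => j _; constructor. Qed.

Lemma lexle_antisym a b :
  lexle a b -> lexle b a -> forall j, L j -> oeq (a j) (b j).
Proof.
move=> Hab Hba; elim/ltn_ind => j IH Lj.
have ab_j : agree_below a b j by move=> m Lm mj; apply: IH.
by split; [apply: Hab | apply: Hba; last apply: agree_below_sym].
Qed.

Lemma lexle_trans a b c : lexle a b -> lexle b c -> lexle a c.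
Proof.
move=> Hab Hbc j Lj ac_j.
have ab_j : agree_below a b j.
  elim/ltn_ind=> m IH Lm mj.
  have ab_m : agree_below a b m by move=> p Lp pm; apply: IH => //; apply: ltn_trans mj.
  have bc_m : agree_below b c m.
    apply: agree_below_trans (agree_below_sym ab_m) _ => p Lp pm.
    exact: ac_j (ltn_trans pm mj).
  split; first exact: Hab.
  exact: ole_trans (Hbc m Lm bc_m) (proj2 (ac_j m Lm mj)).
apply: ole_trans (Hab j Lj ab_j) (Hbc j Lj _).
exact: agree_below_trans (agree_below_sym ab_j) ac_j.
Qed.

Lemma lexle_lt a b j : agree_below a b j -> L j -> olt (a j) (b j) -> lexle a b.
Proof.
move=> ab_j Lj ajbj m Lm ab_m; case: (ltngtP m j) => [mj|jm|->].
- exact: (proj1 (ab_j m Lm mj)).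
- by case: (olt_nle ajbj (proj2 (ab_m j Lj jm))).
- exact: olt_ole.
Qed.

Lemma first_difference a b :
  (forall j, L j -> oeq (a j) (b j)) \/
  exists j, [/\ L j, ~ oeq (a j) (b j) & agree_below a b j].
Proof.
case: (classic (exists j, L j /\ ~ oeq (a j) (b j))) => [Hex|Hall].
- right; case: (ex_least Hex) => j [[Lj Hj] Hmin]; exists j; split => // m Lm mj.
  by apply: NNPP => Hm; apply: (Hmin m mj).
- by left => j Lj; apply: NNPP => Hj; apply: Hall; exists j.
Qed.

Lemma lexle_total a b : lexle a b \/ lexle b a.
Proof.
case: (first_difference a b) => [Heq|[j [Lj Hj ab_j]]].
  by left => j Lj _; apply: (proj1 (Heq j Lj)).
case: (ole_total (a j) (b j)) => [Hle|Hlt].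
- left; apply: lexle_lt ab_j Lj _; apply: nle_olt => Hba; exact: Hj.
- by right; apply: lexle_lt (agree_below_sym ab_j) Lj Hlt.
Qed.

Lemma lex_leP a b : lex_le L a b <-> lexle a b.
Proof.
split; first by case=> [Heq j Lj _|[j [Lj [Hlt Hag]]]];
  [exact: (proj1 (Heq j Lj)) | exact: lexle_lt Hag Lj Hlt].
move=> Hab; case: (first_difference a b) => [Heq|[j [Lj Hj ab_j]]]; first by left.
right; exists j; split => //; split => //.
by apply: nle_olt => Hba; apply: Hj; split => //; apply: Hab.
Qed.

Lemma lexle_oeqr a b c :
  lexle a b -> (forall j, L j -> oeq (b j) (c j)) -> lexle a c.
Proof.
move=> Hab Hbc; apply: lexle_trans Hab _.
by apply: lexle_pointwise => j Lj; case: (Hbc j Lj).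
Qed.

(* Minimise one coordinate after another. *)
Lemma lex_least (K : nat) (A : (nat -> Ord) -> Prop) x :
  (forall j, L j -> j <= K) -> A x -> exists m, A m /\ forall y, A y -> lexle m y.
Proof.
move=> LK Ax.
suff [a [Aa Ha]] : exists a, A a /\ forall b, A b -> forall j, j < K.+1 -> L j ->
    agree_below a b j -> ole (a j) (b j).
  by exists a; split => // y Ay j Lj; apply: Ha (LK j Lj) Lj.
elim: K.+1 {LK} => [|n [a [Aa Ha]]]; first by exists x.
case Ln: (L n); last first.
  exists a; split => // b Ab j; rewrite ltnS leq_eqVlt => /orP [/eqP ->|jn];
    [by rewrite Ln | exact: Ha].
pose B o := exists b, [/\ A b, agree_below a b n & o = b n].
have Ban : B (a n) by exists a; split => // m _ _; apply: oeq_refl.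
case: (ord_least Ban) => _ [[a' [Aa' aa'_n ->]] Hleast].
exists a'; split => // b Ab j; rewrite ltnS leq_eqVlt => /orP [/eqP ->|jn] Lj a'b_j.
- by apply: Hleast; exists b; split => //; apply: agree_below_trans aa'_n a'b_j.
- apply: ole_trans (proj2 (aa'_n j Lj jn)) (Ha b Ab j jn Lj _).
  apply: agree_below_trans _ a'b_j => m Lm mj; exact: aa'_n m Lm (ltn_trans mj jn).
Qed.

End Lex.

Lemma lexle_initial (L : nat -> bool) a b l :
  lexle L a b -> lexle (fun m => L m && (m <= l)) a b.
Proof.
move=> Hab j /andP [Lj jl] Hag; apply: Hab Lj _ => m Lm mj.
by apply: Hag => //; rewrite Lm (leq_trans (ltnW mj)).
Qed.

Lemma prefix_closed_cat (E : seq nat -> Prop) :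
  (forall u c, E (rcons u c) -> E u) -> forall u w, E (u ++ w) -> E u.
Proof.
move=> closedE u; elim/last_ind => [|w c IH]; first by rewrite cats0.
by rewrite -rcons_cat => /closedE.
Qed.

Lemma cat_injr (s a b : seq nat) : s ++ a = s ++ b -> a = b.
Proof. by elim: s => //= x s IH [] /IH. Qed.

Lemma take_size_cat_add (a b : seq nat) n : take (size a + n) (a ++ b) = a ++ take n b.
Proof. by elim: a => //= x a ->. Qed.

Lemma cat_prefix (a b x y : seq nat) :
  a ++ x = b ++ y -> size a <= size b -> exists z, b = a ++ z.
Proof.
move=> Eab ab; exists (take (size b - size a) x).
by rewrite -take_size_cat_add subnKC // Eab take_size_cat.
Qed.

Lemma subtree_cat (s : tree) a b : subtree (subtree s a) b = subtree s (a ++ b).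
Proof. by apply: functional_extensionality => w; rewrite /subtree catA. Qed.

Lemma subtree_nil (s : tree) : subtree s [::] = s.
Proof. exact: functional_extensionality. Qed.

Lemma subtree_rcons (s : tree) u c : subtree (subtree s u) [:: c] = subtree s (rcons u c).
Proof. by rewrite subtree_cat cats1. Qed.

Lemma size_pref b n : size (pref b n) = n.
Proof. exact: size_mkseq. Qed.

Lemma pref_add b d n : pref b (d + n) = pref b d ++ pref (fun x => b (d + x)) n.
Proof.
rewrite /pref /mkseq iotaD map_cat; congr (_ ++ _).
by rewrite add0n -[X in iota X]addn0 iotaDl -map_comp.
Qed.

Lemma pref_Sl b n : pref b n.+1 = b 0 :: pref (fun x => b x.+1) n.
Proof. by rewrite -add1n pref_add. Qed.

Lemma take_pref b n m : n <= m -> take n (pref b m) = pref b n.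
Proof. by move=> nm; rewrite -(subnKC nm) pref_add take_size_cat // size_pref. Qed.

Lemma nth_pref b n m : n < m -> nth 0 (pref b m) n = b n.
Proof. exact: nth_mkseq. Qed.

Definition prepend (u : seq nat) (b : nat -> nat) : nat -> nat :=
  fun n => if n < size u then nth 0 u n else b (n - size u).

Lemma pref_prepend u b n : pref (prepend u b) (size u + n) = u ++ pref b n.
Proof.
rewrite pref_add; congr (_ ++ _).
- apply: (@eq_from_nth _ 0); rewrite size_pref // => x ltxu.
  by rewrite nth_pref // /prepend ltxu.
- by apply: eq_mkseq => x; rewrite /prepend ltnNge leq_addr /= addKn.
Qed.

Lemma pref_prepend_le u b n : n <= size u -> pref (prepend u b) n = take n u.
Proof. by move=> nu; rewrite -(take_pref _ nu) -(addn0 (size u)) pref_prepend cats0. Qed.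

Section Trees.
Variables i k : nat.

Lemma tree_dom_prefix s u w : is_tree i k s -> s (u ++ w) <> None -> s u <> None.
Proof. by move=> [_ [closed _]]; apply: (prefix_closed_cat (E := fun u => s u <> None)). Qed.

Lemma child_lt s u a c :
  is_tree i k s -> s u = Some a -> s (rcons u c) <> None -> c < arity a.
Proof. by move=> [_ [_ H]] Hu; apply: (proj1 (proj2 (H u a Hu) c)). Qed.

Lemma child_dom s u a c :
  is_tree i k s -> s u = Some a -> c < arity a -> s (rcons u c) <> None.
Proof. by move=> [_ [_ H]] Hu; apply: (proj2 (proj2 (H u a Hu) c)). Qed.

Lemma WFT_subtree s u : WFT i k s -> s u <> None -> WFT i k (subtree s u).
Proof.
move=> [[Hroot [Hclosed Hlab]] Hwf] Hu; split; first split.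
- by rewrite /subtree cats0.
- split=> [w c|w a]; rewrite /subtree -?rcons_cat; first exact: Hclosed.
  by case/Hlab => Hj Hc; split => // c; rewrite -rcons_cat.
- move=> b Hb Hinf; apply: (Hwf (prepend u b)).
  + move=> n; case: (leqP n (size u)) => [nu|/ltnW un].
      rewrite pref_prepend_le //.
      by apply: (prefix_closed_cat (E := fun u => s u <> None)) Hclosed _ (drop n u) _;
        rewrite cat_take_drop.
    by rewrite -(subnKC un) pref_prepend; apply: Hb.
  + move=> N; case: (Hinf N) => n [Nn Hsw]; exists (size u + n).
    by rewrite pref_prepend (leq_trans Nn (leq_addl _ _)).
Qed.

Lemma WFT_child s a c :
  WFT i k s -> s [::] = Some a -> c < arity a -> WFT i k (subtree s [:: c]).
Proof.
move=> Hs Ha Hc; apply: WFT_subtree => //.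
by case: Hs => Hs _; apply: (child_dom (u := [::]) Hs Ha).
Qed.

Lemma WFT_node s a : s [::] = Some a -> (forall j, a = Pl j -> i <= j <= k) ->
  (forall c w, arity a <= c -> s (c :: w) = None) ->
  (forall c, c < arity a -> WFT i k (subtree s [:: c])) -> WFT i k s.
Proof.
move=> Hroot Hj Hdom Hsub.
have Harity x w : s (x :: w) <> None -> x < arity a.
  by move=> H; rewrite ltnNge; apply/negP => /(Hdom _ w).
split; first split; [by rewrite Hroot | split |].
- move=> [|x w] c /=; first by rewrite Hroot.
  move=> H; case: (Hsub x (Harity _ _ H)) => [[_ [Hclosed _]] _]; exact: Hclosed H.
- move=> [|x w] a'; last first.
    move=> H; have /Hsub [[_ [_ Hlab]] _] : x < arity a by apply: (Harity x w); rewrite H.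
    exact: Hlab H.
  rewrite Hroot => -[<-]; split => // c; split; first exact: Harity.
  by case/Hsub => [[]].
- move=> b Hb Hinf.
  have /Hsub [_ Hwf] : b 0 < arity a by apply: (Harity _ [::]); move: (Hb 1).
  apply: (Hwf (fun x => b x.+1)) => [n|N]; first by move: (Hb n.+1); rewrite pref_Sl.
  by case: (Hinf N.+1) => [[|n]] [Nn Hsw] //; exists n; split => //; move: Hsw; rewrite pref_Sl.
Qed.

Lemma WFT_mk1 a t : WFT i k t -> (forall j, a = Pl j -> i <= j <= k) ->
  arity a = 1 -> WFT i k (mk1 a t).
Proof.
move=> Ht Hj Ha; apply: (WFT_node (a := a)) => //; rewrite Ha; first by case.
by case.
Qed.

Lemma WFT_mk2 a tl tr : WFT i k tl -> WFT i k tr ->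
  (forall j, a = Pl j -> i <= j <= k) -> arity a = 2 -> WFT i k (mk2 a tl tr).
Proof.
move=> Hl Hr Hj Ha; apply: (WFT_node (a := a)) => //; rewrite Ha; first by case=> [|[]].
by case=> [|[]].
Qed.

Lemma mk1_subtree s a :
  WFT i k s -> s [::] = Some a -> arity a = 1 -> s = mk1 a (subtree s [:: 0]).
Proof.
move=> [Hs _] Hroot Ha; apply: functional_extensionality => [[|[|x] w]] //=.
case E: (s (x.+1 :: w)) => //.
have /(child_lt (u := [::]) Hs Hroot) : s [:: x.+1] <> None.
  by apply: (@tree_dom_prefix s [:: x.+1] w Hs); rewrite E.
by rewrite Ha.
Qed.

Lemma mk2_subtree s a : WFT i k s -> s [::] = Some a -> arity a = 2 ->
  s = mk2 a (subtree s [:: 0]) (subtree s [:: 1]).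
Proof.
move=> [Hs _] Hroot Ha; apply: functional_extensionality => [[|[|[|x]] w]] //=.
case E: (s (x.+2 :: w)) => //.
have /(child_lt (u := [::]) Hs Hroot) : s [:: x.+2] <> None.
  by apply: (@tree_dom_prefix s [:: x.+2] w Hs); rewrite E.
by rewrite Ha.
Qed.

End Trees.

Lemma switched_cat (s : tree) a b :
  switched s (a ++ b) = switched s a (+) switched (subtree s a) b.
Proof.
rewrite /switched size_cat iotaD count_cat oddD; congr (odd _ (+) odd _).
- apply: eq_in_count => n; rewrite mem_iota add0n => /andP [_ na].
  by rewrite takel_cat // ltnW.
- rewrite add0n -[X in iota X]addn0 iotaDl count_map; apply: eq_count => n /=.
  by rewrite take_size_cat_add.
Qed.

Lemma switched_rcons (s : tree) u c :
  switched s (rcons u c) = switched s u (+) isSw (s u).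
Proof. by rewrite -cats1 switched_cat /switched /= /subtree cats0; case: (isSw _). Qed.

Lemma controlled_subtree (t : tree) P a w : ~~ switched t a ->
  controlled (subtree t a) P w <-> controlled t P (a ++ w).
Proof. by move=> Ha; rewrite /controlled switched_cat (negbTE Ha). Qed.

Lemma inf_often_shift (Q1 Q2 : nat -> Prop) d1 d2 :
  (forall n, Q1 (d1 + n) <-> Q2 (d2 + n)) ->
  (forall N, exists n, N <= n /\ Q1 n) -> forall N, exists n, N <= n /\ Q2 n.
Proof.
move=> Q12 H1 N; case: (H1 (d1 + N)) => n [Nn Qn].
by exists (d2 + (n - d1)); split; [lia | apply/Q12; rewrite subnKC //; lia].
Qed.

Lemma eventually_shift (Q1 Q2 : nat -> Prop) d1 d2 :
  (forall n, Q1 (d1 + n) <-> Q2 (d2 + n)) ->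
  (exists N, forall n, N <= n -> Q1 n) -> exists N, forall n, N <= n -> Q2 n.
Proof.
move=> Q12 [N1 H1]; exists (d2 + N1) => n Nn.
by rewrite -(subnKC (leq_trans (leq_addr _ _) Nn)); apply/Q12/H1; lia.
Qed.

Section ShiftBranch.
Variables (i k : nat) (s1 s2 : tree) (b1 b2 : nat -> nat) (d1 d2 : nat).
Hypothesis same_label :
  forall n, s1 (pref b1 (d1 + n)) = s2 (pref b2 (d2 + n)).
Hypothesis same_switched :
  forall n, switched s1 (pref b1 (d1 + n)) = switched s2 (pref b2 (d2 + n)).

Lemma inf_often_iff j : inf_often s1 b1 j <-> inf_often s2 b2 j.
Proof.
by split; [apply: (@inf_often_shift _ _ d1 d2) | apply: (@inf_often_shift _ _ d2 d1)]
  => n; rewrite same_label.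
Qed.

Lemma lim_prio_iff m : lim_prio i k s1 b1 m <-> lim_prio i k s2 b2 m.
Proof.
by rewrite /lim_prio; split; (case=> [[? [/inf_often_iff ? H]]|[? H]];
  [left|right]; do !split => //) => [j ? ? /inf_often_iff|j ? /inf_often_iff]; apply: H.
Qed.

Lemma win1_iff : win1 i k s1 b1 <-> win1 i k s2 b2.
Proof.
have kept_iff n : ~~ switched s1 (pref b1 (d1 + n)) <-> ~~ switched s2 (pref b2 (d2 + n)).
  by rewrite same_switched.
have sw_iff n : switched s1 (pref b1 (d1 + n)) <-> switched s2 (pref b2 (d2 + n)).
  by rewrite same_switched.
split; case=> m [/lim_prio_iff Hm [[H Hodd]|[H Hodd]]]; exists m; split => //;
  [left|right|left|right]; split => //.
- exact: eventually_shift kept_iff H.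
- exact: eventually_shift sw_iff H.
- by apply: (@eventually_shift _ _ d2 d1) H => n; rewrite same_switched.
- by apply: (@eventually_shift _ _ d2 d1) H => n; rewrite same_switched.
Qed.

Lemma won_by_shift P : won_by i k s1 P b1 <-> won_by i k s2 P b2.
Proof. by case: P => /=; rewrite win1_iff. Qed.
End ShiftBranch.

Lemma losing_prio_not_won i k (t : tree) P m b : losing i k P m ->
  inf_often t b m ->
  (exists N, forall p j, N <= p -> t (pref b p) = Some (Pl j) -> m <= j) ->
  (forall p, ~~ switched t (pref b p)) -> ~ won_by i k t P b.
Proof.
move=> Lm Hinf [N0 HN0] Hkept.
have /andP [Hm /eqP Hodd] := Lm.
have Hlow j : j < m -> ~ inf_often t b j.
  move=> jm /(_ N0) [p [N0p Ep]]; by have := HN0 p j N0p Ep; rewrite leqNgt jm.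
have Hprio : lim_prio i k t b m by left; split => //; split => // j _; apply: Hlow.
have Hlim m' : lim_prio i k t b m' -> m' = m.
  case=> [[/andP [im' _] [Hinf' Hlow']]|[_ Hno]]; last by case: (Hno m Hm Hinf).
  case: (ltngtP m' m) => // [/Hlow //|]; by case/andP: Hm => im _ /(Hlow' m im).
case: P Lm Hodd => Lm Hodd /=.
- case=> m' [/Hlim -> [[_ Hev]|[[N HN] _]]]; first by rewrite Hodd in Hev.
  by have := HN N (leqnn N); rewrite (negbTE (Hkept N)).
- apply; exists m; split => //; left; split; last by rewrite Hodd.
  by exists 0 => n _; apply: Hkept.
Qed.

Lemma wf_no_descending_chain (A : Type) (R : A -> A -> Prop) :
  (forall c : nat -> A, ~ (forall n, R (c n.+1) (c n))) -> well_founded R.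
Proof.
move=> Hnochain x; apply: NNPP => Hx.
pose next y := epsilon (inhabits x) (fun z => R z y /\ ~ Acc R z).
have Hnext y : ~ Acc R y -> R (next y) y /\ ~ Acc R (next y).
  move=> Hy; apply: (epsilon_spec (inhabits x) (fun z => R z y /\ ~ Acc R z)).
  apply: NNPP => Hne; apply: Hy; constructor => z Rz.
  by apply: NNPP => Hz; apply: Hne; exists z.
have Hchain n : ~ Acc R (iter n next x) by elim: n => //= n /Hnext [].
by apply: (Hnochain (fun n => iter n next x)) => n; case: (Hnext _ (Hchain n)).
Qed.

(** * Signatures and the signature operator *)

Definition dec (Q : Prop) : bool := if excluded_middle_informative Q then true else false.

Lemma decP (Q : Prop) : reflect Q (dec Q).
Proof. by rewrite /dec; case: excluded_middle_informative => H; constructor. Qed.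

Definition getv (s : sig) : nat -> Ord := if s is Some x then x else zeros.

Definition restrict (d x : sig) : sig := if d is Some _ then Some (getv x) else None.

Lemma restrict_id d x : (d = None <-> x = None) -> restrict d x = x.
Proof. by case: d => [?|] []; case: x => // ? /(_ erefl). Qed.

Section SignatureOrder.
Variables (i k : nat) (P : player).
Notation L := (losing i k P).

Lemma losing_le j : L j -> j <= k.
Proof. by case/andP=> /andP []. Qed.

Definition sig_leq (a b : sig) : Prop :=
  match a, b with
  | _, None => True
  | None, Some _ => False
  | Some x, Some y => lexle L x y
  end.

Lemma sig_leq_refl a : sig_leq a a.
Proof. by case: a => //= x; apply: lexle_refl. Qed.

Lemma sig_leq_trans a b c : sig_leq a b -> sig_leq b c -> sig_leq a c.
Proof. by case: a b c => [x|] [y|] [z|] //=; apply: lexle_trans. Qed.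

Lemma sig_leq_None a b : sig_leq a b -> a = None -> b = None.
Proof. by case: a b => [?|] [?|]. Qed.

Lemma sig_leP a b : sig_le i k P a b <-> sig_leq a b.
Proof. by case: a b => [x|] [y|] //=; apply: lex_leP. Qed.

Lemma sig_eq_leq a b : sig_eq i k P a b -> sig_leq a b /\ sig_leq b a.
Proof.
by case: a b => [x|] [y|] //= Hxy; split; apply: lexle_pointwise => j /Hxy [].
Qed.

Lemma sig_leq_antisym a b : sig_leq a b -> sig_leq b a -> sig_eq i k P a b.
Proof. by case: a b => [x|] [y|] //=; apply: lexle_antisym. Qed.

Lemma restrict_mono d x y :
  (x = None <-> y = None) -> sig_leq x y -> sig_leq (restrict d x) (restrict d y).
Proof.
case: d => [?|] //; case: x y => [x|] [y|] //= [_ H] _; last exact: lexle_refl.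
by have := H erefl.

Qed.

Lemma restrict_le d x : x = None \/ sig_leq x d -> sig_leq (restrict d x) d.
Proof. by case: d => [y|] // [->|]; [apply: lexle0 | case: x]. Qed.

Definition least_tuple (A : (nat -> Ord) -> Prop) : nat -> Ord :=
  epsilon (inhabits zeros) (fun m => A m /\ forall y, A y -> lexle L m y).

Lemma least_tupleP A x :
  A x -> A (least_tuple A) /\ forall y, A y -> lexle L (least_tuple A) y.
Proof.
move=> Ax; apply: (epsilon_spec (inhabits zeros) (fun m => A m /\ _)).
exact: (@lex_least L k A x losing_le Ax).
Qed.

Definition min_sig (a b : sig) : sig :=
  match a, b with
  | None, _ => b
  | _, None => a
  | Some x, Some y => if dec (lexle L x y) then a else b
  end.

Definition max_sig (a b : sig) : sig :=
  match a, b with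
  | Some x, Some y => if dec (lexle L x y) then b else a
  | _, _ => None
  end.

Lemma min_sig_lel a b : sig_leq (min_sig a b) a.
Proof.
case: a b => [x|] [y|] //=; last exact: lexle_refl.
by case: decP => //= ?; [apply: lexle_refl | case: (lexle_total L x y)].
Qed.

Lemma min_sig_ler a b : sig_leq (min_sig a b) b.
Proof.
case: a b => [x|] [y|] //=; first by case: decP => //= _; apply: lexle_refl.
exact: lexle_refl.
Qed.

Lemma max_sig_lel a b : sig_leq a (max_sig a b).
Proof.
case: a b => [x|] [y|] //=.
by case: decP => //= ?; [apply: lexle_refl].
Qed.

Lemma max_sig_ler a b : sig_leq b (max_sig a b).
Proof.
case: a b => [x|] [y|] //=.
by case: decP => //= ?; [apply: lexle_refl | case: (lexle_total L x y)].
Qed.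

Lemma min_sig_cases a b : min_sig a b = a \/ min_sig a b = b.
Proof. by case: a b => [x|] [y|] /=; try case: decP; auto. Qed.

Lemma max_sig_cases a b : max_sig a b = a \/ max_sig a b = b \/ max_sig a b = None.
Proof. by case: a b => [x|] [y|] /=; try case: decP; auto. Qed.

Lemma min_sig_None a b : min_sig a b = None <-> a = None /\ b = None.
Proof. by case: a b => [x|] [y|] /=; try case: decP; intuition. Qed.

Lemma max_sig_None a b : max_sig a b = None <-> a = None \/ b = None.
Proof. by case: a b => [x|] [y|] /=; try case: decP; intuition. Qed.

Lemma min_sig_mono a b a' b' :
  sig_leq a a' -> sig_leq b b' -> sig_leq (min_sig a b) (min_sig a' b').
Proof.
move=> aa' bb'; case: (min_sig_cases a' b') => ->.
- exact: sig_leq_trans (min_sig_lel a b) aa'.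
- exact: sig_leq_trans (min_sig_ler a b) bb'.
Qed.

Lemma max_sig_lub a b c : sig_leq a c -> sig_leq b c -> sig_leq (max_sig a b) c.
Proof.
case: (max_sig_cases a b) => [->|[->|E]] // ac bc; rewrite E.
by case/max_sig_None: E => [/(sig_leq_None ac)|/(sig_leq_None bc)] ->.
Qed.

Lemma max_sig_mono a b a' b' :
  sig_leq a a' -> sig_leq b b' -> sig_leq (max_sig a b) (max_sig a' b').
Proof.
move=> aa' bb'; apply: max_sig_lub.
- exact: sig_leq_trans aa' (max_sig_lel a' b').
- exact: sig_leq_trans bb' (max_sig_ler a' b').
Qed.

Lemma sig_eq_None a b : sig_eq i k P a b -> (a = None <-> b = None).
Proof. by case: a b => [?|] [?|]. Qed.

Lemma sig_min_None s a b : sig_min i k P s a b -> (s = None <-> a = None /\ b = None).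
Proof.
case=> [[/sig_leP ab /sig_eq_None ->]|[/sig_leP ba /sig_eq_None ->]].
- by split=> [aN|[]//]; rewrite (sig_leq_None ab aN).
- by split=> [bN|[]//]; rewrite (sig_leq_None ba bN).
Qed.

Lemma sig_max_None s a b : sig_max i k P s a b -> (s = None <-> a = None \/ b = None).
Proof.
case=> [[/sig_leP ab /sig_eq_None ->]|[/sig_leP ba /sig_eq_None ->]].
- by split=> [|[/(sig_leq_None ab)|]]; auto.
- by split=> [|[|/(sig_leq_None ba)]]; auto.
Qed.

Lemma sig_eq_min_sig s a b : sig_eq i k P s (min_sig a b) -> sig_min i k P s a b.
Proof.
case: (min_sig_cases a b) => E Hs.
- by move: Hs; have := min_sig_ler a b; rewrite E => /sig_leP; left.
- by move: Hs; have := min_sig_lel a b; rewrite E => /sig_leP; right.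
Qed.


Lemma sig_eq_max_sig s a b : sig_eq i k P s (max_sig a b) -> sig_max i k P s a b.
Proof.
case: (max_sig_cases a b) => [E|[E|E]] Hs.
- by move: Hs; have := max_sig_ler a b; rewrite E => /sig_leP; right.
- by move: Hs; have := max_sig_lel a b; rewrite E => /sig_leP; left.
- move: Hs; rewrite E; case: s => // _.
  by case/max_sig_None: E => ->; [right | left]; split => //; case: a b => [?|] [?|].
Qed.

Lemma min_sig_le_sig_min s a b : sig_min i k P s a b -> sig_leq (min_sig a b) s.
Proof.
case=> [[_ /sig_eq_leq [_ as_]]|[_ /sig_eq_leq [_ bs]]].
- exact: sig_leq_trans (min_sig_lel a b) as_.
- exact: sig_leq_trans (min_sig_ler a b) bs.
Qed.

Lemma max_sig_le_sig_max s a b : sig_max i k P s a b -> sig_leq (max_sig a b) s.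
Proof.
case=> [[/sig_leP ab /sig_eq_leq [_ bs]]|[/sig_leP ba /sig_eq_leq [_ as_]]];
  apply: max_sig_lub => //; apply: sig_leq_trans; eassumption.
Qed.
End SignatureOrder.

Section SignatureOperator.
Variables (i k : nat) (P : player) (sg : tree -> sig).
Notation L := (losing i k P).
Notation sig_leq := (sig_leq i k P).
Notation sig_eq := (sig_eq i k P).

Definition owned (Q : player) : bool :=
  match Q, P with P1, P1 | P2, P2 => true | _, _ => false end.

Lemma owned_P : owned P. Proof. by rewrite /owned; case: P. Qed.
Lemma owned_opp : owned (opp P) = false. Proof. by rewrite /owned; case: P. Qed.
Lemma player_cases Q : Q = P \/ Q = opp P. Proof. by case: Q; case: P; auto. Qed.

Definition succ_at (j : nat) (x : nat -> Ord) : nat -> Ord :=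
  fun m => if m < j then x m else if L j && (m == j) then OS (x j) else OZ.

Lemma succ_at_losing j x : L j ->
  succ_at j x = fun m => if m < j then x m else if m == j then OS (x j) else OZ.
Proof. by rewrite /succ_at => ->. Qed.

Lemma succ_at_winning j x : ~~ L j -> succ_at j x = fun m => if m < j then x m else OZ.
Proof. by rewrite /succ_at => /negbTE ->. Qed.

Lemma succ_at_mono j x y : lexle L x y -> lexle L (succ_at j x) (succ_at j y).
Proof.
move=> xy m Lm Hag; rewrite /succ_at.
have xy_below p : L p -> p < m -> p < j -> oeq (x p) (y p).
  by move=> Lp pm pj; move: (Hag p Lp pm); rewrite /succ_at pj.
case: (ltngtP m j) => [mj|jm|mj].
- by apply: xy => // p Lp pm; apply: xy_below (ltn_trans pm mj).
- by rewrite andbF; constructor.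
- subst j; rewrite andbT Lm; apply: ole_succ_mono; apply: xy => // p Lp pm.
  exact: xy_below.
Qed.

(* One unfolding of conditions (2)-(6): the signature a node would get from
   the signatures [p] of its children. *)
Definition step (p : tree -> sig) (s : tree) : sig :=
  match s [::] with
  | Some (Pl j) => omap (succ_at j) (p (subtree s [:: 0]))
  | Some (C Q) => (if owned Q then min_sig i k P else max_sig i k P)
                    (p (subtree s [:: 0])) (p (subtree s [:: 1]))
  | _ => Some zeros
  end.

Definition sig_op (p : tree -> sig) (s : tree) : sig := restrict (sg s) (step p s).

Definition same_domain (p : tree -> sig) : Prop :=
  forall s, WFT i k s -> (p s = None <-> sg s = None).

Definition prefixed (p : tree -> sig) : Prop :=
  same_domain p /\ forall s, WFT i k s -> sig_leq (sig_op p s) (p s).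

Lemma sig_op_None p s : sig_op p s = None <-> sg s = None.
Proof. by rewrite /sig_op; case: (sg s). Qed.

Lemma step_mono p q s : WFT i k s -> (forall s, WFT i k s -> sig_leq (p s) (q s)) ->
  sig_leq (step p s) (step q s).
Proof.
move=> Hs pq; rewrite /step; case Hroot: (s [::]) => [[j||Q]|] //=; try exact: lexle_refl.
- have /pq : WFT i k (subtree s [:: 0]) by apply: WFT_child Hs Hroot _.
  by case: (p _) (q _) => [?|] [?|] //=; apply: succ_at_mono.
- have /pq H0 : WFT i k (subtree s [:: 0]) by apply: WFT_child Hs Hroot _.
  have /pq H1 : WFT i k (subtree s [:: 1]) by apply: WFT_child Hs Hroot _.
  by case: (owned Q); [apply: min_sig_mono | apply: max_sig_mono].
Qed.

Lemma step_None_iff p q s : WFT i k s -> same_domain p -> same_domain q ->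
  (step p s = None <-> step q s = None).
Proof.
move=> Hs dp dq.
have pq c : WFT i k (subtree s [:: c]) ->
    (p (subtree s [:: c]) = None <-> q (subtree s [:: c]) = None).
  by move=> Hc; split => [/(dp _ Hc)/(dq _ Hc) | /(dq _ Hc)/(dp _ Hc)].
rewrite /step; case Hroot: (s [::]) => [[j||Q]|] //.
- have := pq 0 (WFT_child Hs Hroot (isT : 0 < arity (Pl j))).
  case: (p _) (q _) => [?|] [?|] //= [H1 H2]; [by have := H2 erefl | by have := H1 erefl].
- have H0 := pq 0 (WFT_child Hs Hroot (isT : 0 < arity (C Q))).
  have H1 := pq 1 (WFT_child Hs Hroot (isT : 1 < arity (C Q))).
  case: (owned Q).
  + by split=> /min_sig_None [/H0 ? /H1 ?]; apply/min_sig_None.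
  + by split=> /max_sig_None [/H0|/H1] ?; apply/max_sig_None; auto.
Qed.

Lemma sig_op_mono p q s : WFT i k s -> same_domain p -> same_domain q ->
  (forall s, WFT i k s -> sig_leq (p s) (q s)) -> sig_leq (sig_op p s) (sig_op q s).
Proof.
move=> Hs dp dq pq; apply: restrict_mono; first exact: step_None_iff.
exact: step_mono.
Qed.

Hypothesis Hcond : sig_conditions i k P sg.

Lemma sg_prefixed : prefixed sg.
Proof.
case: Hcond => _ [_ [C3 [C4 [C5 C6]]]]; split => // s Hs.
rewrite /sig_op; case Es: (sg s) => [a|] //; rewrite -Es; apply: restrict_le.
rewrite /step; case Hroot: (s [::]) => [[j||Q]|]; try by right; rewrite Es; apply: lexle0.
- have H0 := WFT_child Hs Hroot (isT : 0 < arity (Pl j)).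
  have Hj : i <= j <= k by case: Hs => [[_ [_ /(_ _ _ Hroot) [/(_ j erefl)]]]].
  rewrite [in sg s](mk1_subtree Hs Hroot) //.
  case E0: (sg _) => [x|] /=; [right | by left].
  case Lj: (L j).
  + by case: (sig_eq_leq (C4 _ j x H0 Lj E0)); rewrite succ_at_losing.
  + by case: (sig_eq_leq (C3 _ j x H0 Hj (negbT Lj) E0)); rewrite succ_at_winning ?Lj.
- have H0 := WFT_child Hs Hroot (isT : 0 < arity (C Q)).
  have H1 := WFT_child Hs Hroot (isT : 1 < arity (C Q)).
  right; rewrite [in sg s](mk2_subtree Hs Hroot) //.
  case: (player_cases Q) => ->; rewrite ?owned_P ?owned_opp.
  + exact: min_sig_le_sig_min (C5 _ _ H0 H1).
  + exact: max_sig_le_sig_max (C6 _ _ H0 H1).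
Qed.

Lemma step_subtree p (t : tree) u : step p (subtree t u) =
  match t u with
  | Some (Pl j) => omap (succ_at j) (p (subtree t (rcons u 0)))
  | Some (C Q) => (if owned Q then min_sig i k P else max_sig i k P)
                    (p (subtree t (rcons u 0))) (p (subtree t (rcons u 1)))
  | _ => Some zeros
  end.
Proof. by rewrite /step !subtree_rcons {1}/subtree cats0. Qed.

Lemma step_mk1_switch p t : step p (mk1 Sw t) = Some zeros. Proof. by []. Qed.
Lemma step_mk1_prio p j t : step p (mk1 (Pl j) t) = omap (succ_at j) (p t). Proof. by []. Qed.
Lemma step_mk2 p Q tl tr :
  step p (mk2 (C Q) tl tr) = (if owned Q then min_sig i k P else max_sig i k P) (p tl) (p tr).
Proof. by []. Qed.

(* Knaster-Tarski: the pointwise least prefixed point is a fixed point. *)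
Definition prefixed_value (s : tree) (x : nat -> Ord) : Prop :=
  exists p, prefixed p /\ p s = Some x.

Definition sig_lfp (s : tree) : sig :=
  if sg s is Some _ then Some (least_tuple i k P (prefixed_value s)) else None.

Lemma lfp_same_domain : same_domain sig_lfp.
Proof. by move=> s _; rewrite /sig_lfp; case: (sg s). Qed.

Lemma lfp_le_prefixed p : prefixed p -> forall s, WFT i k s -> sig_leq (sig_lfp s) (p s).
Proof.
move=> [dp pre] s Hs; rewrite /sig_lfp.
case Es: (sg s) => [a|]; last by rewrite (proj2 (dp s Hs) Es).
case Ep: (p s) => [x|] //=.
have Ax : prefixed_value s x by exists p.
exact: (proj2 (least_tupleP i k P Ax) x Ax).
Qed.

Lemma lfp_prefixed : prefixed sig_lfp.
Proof.
split=> [|s Hs]; first exact: lfp_same_domain.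
rewrite {2}/sig_lfp; case Es: (sg s) => [a|]; last by case: (sig_op _ _).
have Aa : prefixed_value s a.
  by exists sg; split => //; apply: sg_prefixed.
case: (proj1 (least_tupleP i k P Aa)) => p0 [Hp0 <-].
apply: sig_leq_trans (proj2 Hp0 s Hs).
apply: sig_op_mono => //; first exact: lfp_same_domain.
- exact: (proj1 Hp0).
- exact: lfp_le_prefixed.
Qed.

Lemma lfp_fixed s : WFT i k s -> sig_eq (sig_lfp s) (sig_op sig_lfp s).
Proof.
move=> Hs; apply: sig_leq_antisym; last exact: (proj2 lfp_prefixed).
apply: lfp_le_prefixed Hs; split=> [s' _|s' Hs']; first exact: sig_op_None.
apply: sig_op_mono => //; first by move=> ? _; apply: sig_op_None.
- exact: lfp_same_domain.
- exact: (proj2 lfp_prefixed).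
Qed.

Lemma lfp_eq_step s : WFT i k s -> (sg s = None <-> step sig_lfp s = None) ->
  sig_eq (sig_lfp s) (step sig_lfp s).
Proof. by move=> Hs Hdom; rewrite -[step _ _](restrict_id Hdom); apply: lfp_fixed. Qed.

Lemma lfp_conditions : sig_conditions i k P sig_lfp.
Proof.
case: Hcond => C1 [C2 [C3 [C4 [C5 C6]]]].
have lfpN s : WFT i k s -> sig_lfp s = None <-> sg s = None by apply: lfp_same_domain.
have lfpS s th : sig_lfp s = Some th -> exists x, sg s = Some x.
  by rewrite /sig_lfp; case: (sg s) => // x; exists x.
split; [|split; [|split; [|split; [|split]]]].
- by move=> s Hs; split => [/(lfpN _ Hs)/(C1 _ Hs) | /(C1 _ Hs)/(lfpN _ Hs)].
- move=> t Ht Hwin; have Ht' : WFT i k (mk1 Sw t) by apply: WFT_mk1.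
  apply: (lfp_eq_step Ht'); rewrite step_mk1_switch.
  by split => // /(C1 _ Ht').
- move=> t j th Ht Hj Lj E; have Ht' : WFT i k (mk1 (Pl j) t) by apply: WFT_mk1 => // ? [<-].
  case: (lfpS _ _ E) => x Ex.
  have := lfp_eq_step Ht'; rewrite step_mk1_prio E /= succ_at_winning //; apply.
  by split => //; move/sig_eq_None: (C3 _ j x Ht Hj Lj Ex) => /[apply].
- move=> t j th Ht Lj E; have Ht' : WFT i k (mk1 (Pl j) t).
    by apply: WFT_mk1 => // ? [<-]; case/andP: Lj.
  case: (lfpS _ _ E) => x Ex.
  have := lfp_eq_step Ht'; rewrite step_mk1_prio E /= succ_at_losing //; apply.
  by split => //; move/sig_eq_None: (C4 _ j x Ht Lj Ex) => /[apply].
- move=> tl tr Hl Hr; have Hs : WFT i k (mk2 (C P) tl tr) by apply: WFT_mk2.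
  apply: sig_eq_min_sig; have := lfp_eq_step Hs; rewrite step_mk2 owned_P; apply.
  have HN := sig_min_None (C5 _ _ Hl Hr).
  split => [/HN [/(lfpN _ Hl) ? /(lfpN _ Hr) ?]
          | /min_sig_None [/(lfpN _ Hl) ? /(lfpN _ Hr) ?]].
  + exact/min_sig_None.
  + exact/HN.
- move=> tl tr Hl Hr; have Hs : WFT i k (mk2 (C (opp P)) tl tr) by apply: WFT_mk2.
  apply: sig_eq_max_sig; have := lfp_eq_step Hs; rewrite step_mk2 owned_opp; apply.
  have HN := sig_max_None (C6 _ _ Hl Hr).
  split => [/HN [/(lfpN _ Hl) ?|/(lfpN _ Hr) ?]
          | /max_sig_None [/(lfpN _ Hl) ?|/(lfpN _ Hr) ?]].
  + by apply/max_sig_None; left.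
  + by apply/max_sig_None; right.
  + by apply/HN; left.
  + by apply/HN; right.
Qed.
End SignatureOperator.

Lemma is_sigma_le_prefixed i k P sg p : is_sigma i k P sg -> prefixed i k P sg p ->
  forall s, WFT i k s -> sig_leq i k P (sg s) (p s).
Proof.
case=> Hcond Hmin Hp s Hs; apply: sig_leq_trans _ (lfp_le_prefixed Hp Hs).
exact/sig_leP/(Hmin _ (lfp_conditions Hcond)).
Qed.

(** * Bounding the signature along a partial strategy *)

Definition winning_strategy (i k : nat) (P : player) (s : tree) (E : seq nat -> Prop) :=
  E [::] /\
  (forall u c, E (rcons u c) -> E u) /\
  (forall u, E u -> s u <> None) /\
  (forall u, E u -> controlled s P u ->
     exists c, E (rcons u c) /\ forall c', E (rcons u c') -> c' = c) /\
  (forall u, E u -> ~ controlled s P u ->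
     forall c, s (rcons u c) <> None -> E (rcons u c)) /\
  (forall b, (forall n, E (pref b n)) -> won_by i k s P b).

Section PartialStrategy.
Variables (i k : nat) (P : player) (sg : tree -> sig).
Hypothesis hsg : is_sigma i k P sg.
Variable t : tree.
Hypothesis Ht : WFT i k t.
Variables (l : nat) (th : nat -> Ord) (S : seq nat -> Prop).
Hypothesis hS : partial_strategy P t S.
Hypothesis S_labels :
  forall u, S u -> t u <> Some Sw /\ (forall j, j <= l -> t u <> Some (Pl j)).
Hypothesis S_won : forall b, (forall n, S (pref b n)) -> won_by i k t P b.
Hypothesis exit_bounded : forall u c, not_reachable P t S u c ->
  sig_restr_le i k P l (sg (subtree t (rcons u c))) th.
Notation L := (losing i k P).

Let Htree : is_tree i k t. Proof. by case: Ht. Qed.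

Lemma S_prefix u w : S (u ++ w) -> S u.
Proof. by case: hS => _ [Hclosed _]; apply: prefix_closed_cat. Qed.

Lemma S_dom u : S u -> t u <> None.
Proof. by case: hS => _ [_ [dom _]]; apply: dom. Qed.

Lemma S_kept u : S u -> ~~ switched t u.
Proof.
elim/last_ind: u => [|u c IH] // Suc.
have Su : S u by apply: (@S_prefix u [:: c]); rewrite cats1.
rewrite switched_rcons (negbTE (IH Su)) /=.
by case: (S_labels Su) => nSw _; case E: (t u) => [[]|] //; rewrite E in nSw.
Qed.

Lemma S_controlled u : S u -> controlled t P u <-> t u = Some (C P).
Proof.
move=> Su; have kept := S_kept Su; rewrite /controlled.
by split => [[[_ ->]|[sw _]]|->] //; [rewrite sw in kept | left].
Qed.

Definition exit (e : seq nat) : Prop :=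
  exists u c, e = rcons u c /\ not_reachable P t S u c.

Lemma exit_dom e : exit e -> t e <> None.
Proof.
by move=> [u [c [-> [_ [[Q EQ] [c2 _]]]]]]; apply: child_dom Htree EQ c2.
Qed.

Lemma exit_notS e w : exit e -> ~ S (e ++ w).
Proof. by move=> [u [c [-> [_ [_ [_ [_ nS]]]]]]] /S_prefix. Qed.

Lemma exit_kept e : exit e -> ~~ switched t e.
Proof.
move=> [u [c [-> [Su _]]]]; rewrite switched_rcons (negbTE (S_kept Su)) /=.
by case: (S_labels Su) => nSw _; case E: (t u) => [[]|] //; rewrite E in nSw.
Qed.

Lemma exit_unique e1 e2 w1 w2 : exit e1 -> exit e2 -> e1 ++ w1 = e2 ++ w2 -> e1 = e2.
Proof.
wlog le12 : e1 e2 w1 w2 / size e1 <= size e2.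
  move=> wlog_le X1 X2 E; case: (leqP (size e1) (size e2)) => [le12|/ltnW le21].
  - exact: wlog_le E.
  - exact/esym/(wlog_le _ _ _ _ le21 X2 X1 (esym E)).
move=> X1 [u [c [E2 [Su _]]]] E; case: (cat_prefix E le12) => z.
case/lastP: z => [|z c'] Ez; first by rewrite Ez cats0.
exfalso; move: Ez; rewrite E2 -rcons_cat => /rcons_inj [Eu _].
by apply: (exit_notS (w := z) X1); rewrite -Eu.
Qed.

Lemma exit_wins e : exit e -> P_wins i k P (subtree t e).
Proof.
move=> X; have He := WFT_subtree Ht (exit_dom X).
case: X => u [c [Ee /exit_bounded]]; rewrite -Ee.
case: hsg => [[C1 _] _] bounded; apply: NNPP => /(proj2 (C1 _ He)) E.
by rewrite E in bounded.
Qed.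

Definition exit_strategy (e : seq nat) : seq nat -> Prop :=
  epsilon (inhabits (fun _ => False)) (winning_strategy i k P (subtree t e)).

Lemma exit_strategyP e : exit e -> winning_strategy i k P (subtree t e) (exit_strategy e).
Proof. by move/exit_wins; apply: epsilon_spec. Qed.

Lemma exit_of_leaving u c : S u -> ~ controlled t P u ->
  t (rcons u c) <> None -> ~ S (rcons u c) -> exit (rcons u c).
Proof.
move=> Su nc Huc nSuc; case Et: (t u) => [a|]; last by case: (S_dom Su).
have := child_lt Htree Et Huc; case: a Et => [j||Q] Et ca.
- case: hS => _ [_ [_ [/(_ u Su) [c' Suc'] _]]].
  have := child_lt Htree Et (S_dom Suc'); move: ca.
  by rewrite /= !ltnS !leqn0 => /eqP Ec /eqP Ec'; case: nSuc; rewrite Ec -Ec'.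
- by case: (S_labels Su) => /(_ Et).
- by exists u, c; do !split => //; exists Q.
Qed.

Section FromNode.
Variable u0 : seq nat.
Hypothesis S_u0 : S u0.
Notation s := (subtree t u0).

(* Follow [S] from [u0] and, once [S] is left through an exit, a winning
   strategy from that exit. *)
Definition merged (w : seq nat) : Prop :=
  S (u0 ++ w) \/ exists w1 w2,
    [/\ w = w1 ++ w2, exit (u0 ++ w1) & exit_strategy (u0 ++ w1) w2].

Lemma merged_after_exit w1 w2 :
  exit (u0 ++ w1) -> merged (w1 ++ w2) -> exit_strategy (u0 ++ w1) w2.
Proof.
move=> X1 [HS|[w1' [w2' [E X1' HE]]]].
  by case: (exit_notS (w := w2) X1); rewrite -catA.
have /cat_injr Ew : u0 ++ w1 = u0 ++ w1'.
  by apply: (exit_unique (w1 := w2) (w2 := w2')); rewrite // -!catA E.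
by subst w1'; move/cat_injr: E => ->.
Qed.

Lemma merged_prefix w c : merged (rcons w c) -> merged w.
Proof.
case=> [HS|[w1 [w2 [E X1 HE]]]].
  by left; apply: (S_prefix (w := [:: c])); rewrite -catA cats1.
case/lastP: w2 E HE => [|w2 c'] E HE.
- left; move: X1; rewrite cats0 in E; rewrite -E -rcons_cat.
  by case=> u [c'' [/rcons_inj [<- _] [Su _]]].
- move: E; rewrite -rcons_cat => /rcons_inj [-> _].
  right; exists w1, w2; split => //.
  by case: (exit_strategyP X1) => _ [Hclosed _]; apply: Hclosed HE.
Qed.

Lemma merged_dom w : merged w -> s w <> None.
Proof.
case=> [/S_dom //|[w1 [w2 [-> X1 HE]]]].
by case: (exit_strategyP X1) => _ [_ [dom _]]; move: (dom _ HE); rewrite /subtree !catA.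
Qed.

Lemma merged_controlled w : merged w -> controlled s P w ->
  exists c, merged (rcons w c) /\ forall c', merged (rcons w c') -> c' = c.
Proof.
rewrite (controlled_subtree _ _ (S_kept S_u0)).
case=> [HS|[w1 [w2 [-> X1 HE]]]] Hc.
- case: hS => _ [_ [_ [_ choice]]]; case: (choice _ HS Hc) => c [Sc unique].
  exists c; split; first by left; rewrite -rcons_cat.
  move=> c' [HS'|[w1 [w2 [E X1 HE]]]]; first by apply: unique; rewrite rcons_cat.
  case/lastP: w2 E HE => [|w2 c''] E HE; exfalso.
  + move: X1; rewrite cats0 in E; rewrite -E -rcons_cat.
    by case=> u [c3 [/rcons_inj [<- _] [_ [_ [_ [nc _]]]]]].
  + move: E; rewrite -rcons_cat => /rcons_inj [Ew _]; subst w.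
    by apply: (exit_notS (w := w2) X1); rewrite -catA.
- have : controlled (subtree t (u0 ++ w1)) P w2.
    by rewrite (controlled_subtree _ _ (exit_kept X1)) -catA.
  case: (exit_strategyP X1) => _ [_ [_ [choice _]]] /(choice _ HE) [c [Ec unique]].
  exists c; split; first by right; exists w1, (rcons w2 c); rewrite rcons_cat.
  by move=> c' Hm; apply/unique/(merged_after_exit X1); rewrite -rcons_cat.
Qed.

Lemma merged_uncontrolled w : merged w -> ~ controlled s P w ->
  forall c, s (rcons w c) <> None -> merged (rcons w c).
Proof.
rewrite (controlled_subtree _ _ (S_kept S_u0)) => Hw Hnc c Hdom.
have Hdom' : t (rcons (u0 ++ w) c) <> None by rewrite rcons_cat.
case: Hw => [HS|[w1 [w2 [Ew X1 HE]]]].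
- case: (classic (S (u0 ++ rcons w c))) => HSc; first by left.
  have X : exit (u0 ++ rcons w c).
    by rewrite -rcons_cat; apply: exit_of_leaving => //; rewrite rcons_cat.
  right; exists (rcons w c), [::]; rewrite cats0; split => //.
  by case: (exit_strategyP X).
- subst w; right; exists w1, (rcons w2 c); rewrite rcons_cat; split => //.
  case: (exit_strategyP X1) => _ [_ [_ [_ [Hunc _]]]]; apply: Hunc => //.
  + by rewrite (controlled_subtree _ _ (exit_kept X1)) -catA.
  + by move: Hdom; rewrite /subtree rcons_cat !catA.
Qed.

Lemma merged_won b : (forall n, merged (pref b n)) -> won_by i k s P b.
Proof.
move=> Hb; have kept0 := S_kept S_u0.
case: (classic (forall n, S (u0 ++ pref b n))) => [HS|].
  have HS' n : S (pref (prepend u0 b) n).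
    case: (leqP n (size u0)) => [nu|/ltnW un].
    - by rewrite pref_prepend_le //; apply: (S_prefix (w := drop n u0)); rewrite cat_take_drop.
    - by rewrite -(subnKC un) pref_prepend.
  have same_label n : t (pref (prepend u0 b) (size u0 + n)) = s (pref b (0 + n)).
    by rewrite pref_prepend.
  have same_sw n : switched t (pref (prepend u0 b) (size u0 + n)) = switched s (pref b (0 + n)).
    by rewrite pref_prepend switched_cat (negbTE kept0).
  exact/(won_by_shift i k same_label same_sw P)/S_won.
move=> /not_all_ex_not [n nS]; case: (Hb n) => [//|[w1 [w2 [Epb X1 _]]]].
pose d := size w1; pose b2 x := b (d + x).
have pref_d : pref b d = w1.
  have dn : d <= n by rewrite -(size_pref b n) Epb size_cat leq_addr.
  by rewrite -(take_pref b dn) Epb take_size_cat.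
have pref_dm m : pref b (d + m) = w1 ++ pref b2 m by rewrite pref_add pref_d.
case: (exit_strategyP X1) => _ [_ [_ [_ [_ Hwin]]]].
have same_label m : subtree t (u0 ++ w1) (pref b2 (0 + m)) = s (pref b (d + m)).
  by rewrite add0n pref_dm /subtree catA.
have same_sw m :
    switched (subtree t (u0 ++ w1)) (pref b2 (0 + m)) = switched s (pref b (d + m)).
  rewrite add0n pref_dm switched_cat subtree_cat.
  by move: (exit_kept X1); rewrite switched_cat (negbTE kept0) /= => /negbTE ->.
apply/(won_by_shift i k same_label same_sw P)/Hwin => m.
by apply: merged_after_exit X1 _; rewrite -pref_dm.
Qed.

Lemma S_node_wins : P_wins i k P s.
Proof.
exists merged; split; first by left; rewrite cats0.
split; first exact: merged_prefix.
split; first exact: merged_dom.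
split; first exact: merged_controlled.
split; [exact: merged_uncontrolled | exact: merged_won].
Qed.
End FromNode.

Lemma S_sig_defined u : S u -> sg (subtree t u) <> None.
Proof.
move=> Su; have Hu := WFT_subtree Ht (S_dom Su).
by case: hsg => [[C1 _] _] /(proj1 (C1 _ Hu)); apply; apply: S_node_wins.
Qed.

Lemma prefix_chain_branch (c : nat -> seq nat) :
  (forall n, exists2 w, w <> [::] & c n.+1 = c n ++ w) ->
  (forall n, n <= size (c n)) /\
  forall n, pref (fun x => nth 0 (c x.+1) x) (size (c n)) = c n.
Proof.
move=> grows; have size_grows n : size (c n) < size (c n.+1).
  by case: (grows n) => w w0 ->; rewrite size_cat -addn1 leq_add2l lt0n size_eq0; apply/eqP.
have Hsize n : n <= size (c n) by elim: n => // n IH; apply: leq_ltn_trans IH (size_grows n).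
have extends n n' : n <= n' -> exists w, c n' = c n ++ w.
  elim: n' => [|n' IH]; first by rewrite leqn0 => /eqP ->; exists [::]; rewrite cats0.
  rewrite leq_eqVlt => /orP [/eqP ->|/IH [w E]]; first by exists [::]; rewrite cats0.
  by case: (grows n') => w' _ ->; exists (w ++ w'); rewrite E catA.
have nth_ext n n' x : n <= n' -> x < size (c n) -> nth 0 (c n') x = nth 0 (c n) x.
  by move=> /extends [w ->] xn; rewrite nth_cat xn.
split=> // n; apply: (@eq_from_nth _ 0); rewrite size_pref // => x xn.
rewrite nth_pref // -(nth_ext x.+1 (maxn x.+1 n)) ?leq_maxl ?(Hsize x.+1) //.
exact: nth_ext (leq_maxr _ _) xn.
Qed.

Definition descent (m : nat) (v u : seq nat) : Prop :=
  [/\ L m, S u, S v & exists w, [/\ w <> [::], v = u ++ w,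
    forall n j, n < size w -> t (u ++ take n w) = Some (Pl j) -> m <= j &
    exists2 n, n < size w & t (u ++ take n w) = Some (Pl m)]].

Lemma descent_wf m : well_founded (descent m).
Proof.
apply: wf_no_descending_chain => c Hc; have [Lm _ _ _] := Hc 0.
have grows n : exists2 w, w <> [::] & c n.+1 = c n ++ w.
  by case: (Hc n) => _ _ _ [w [? ? _ _]]; exists w.
have [Hsize] := prefix_chain_branch grows; set b := fun x => _ => Hpref.
have pref_take p n : p <= size (c n) -> pref b p = take p (c n).
  by move=> pn; rewrite -(take_pref b pn) Hpref.
have inS p : S (pref b p).
  rewrite (pref_take p p (Hsize p)); case: (Hc p) => _ Sp _ _.
  by apply: (S_prefix (w := drop p (c p))); rewrite cat_take_drop.
apply: (losing_prio_not_won Lm _ _ (fun p => S_kept (inS p)) (S_won inS)).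
  move=> N; case: (Hc N) => _ _ _ [w [_ E _ [q qw Eq]]].
  exists (size (c N) + q); split; first exact: leq_trans (Hsize N) (leq_addr _ _).
  by rewrite (pref_take _ N.+1) E ?take_size_cat_add // size_cat leq_add2l ltnW.
exists (size (c 0)) => p j p0 Ej.
have [] := ex_least (ex_intro (fun n => p < size (c n)) p.+1 (Hsize p.+1)).
case=> [|n] [pn min_n]; first by rewrite ltnNge p0 in pn.
have np : size (c n) <= p by rewrite leqNgt; apply/negP/min_n.
case: (Hc n) => _ _ _ [w [_ E Hmin _]].
move: Ej; rewrite (pref_take _ n.+1 (ltnW pn)) E -(subnKC np) take_size_cat_add.
by apply: Hmin; rewrite -(ltn_add2l (size (c n))) subnKC // -size_cat -E.
Qed.

Definition exit_sup (m : nat) : Ord :=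
  OL (fun n => if unpickle n is Some e then
                 if dec (exit e) then OS (getv (sg (subtree t e)) m) else OZ
               else OZ).

Definition rank_step m u (rec : forall v, descent m v u -> Ord) : Ord :=
  OL (fun n => if n is n'.+1 then
        if unpickle n' is Some v then
          match excluded_middle_informative (descent m v u) with
          | left H => OS (rec v H) | right _ => OZ
          end
        else OZ
      else exit_sup m).

Definition rank m : seq nat -> Ord := Fix (descent_wf m) (fun _ => Ord) (@rank_step m).

Lemma rank_eq m u : rank m u = @rank_step m u (fun v _ => rank m v).
Proof.
rewrite /rank Fix_eq // => x f g fg; congr OL; apply: functional_extensionality.
case=> // n; case: (unpickle n) => // v.
by case: excluded_middle_informative => // H; rewrite fg.
Qed.

Lemma rank_lt m v u : descent m v u -> olt (rank m v) (rank m u).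
Proof.
move=> H; rewrite /olt (rank_eq m u); apply: (@ole_cocone _ _ (pickle v).+1).
by rewrite pickleK; case: excluded_middle_informative => // _; apply: ole_refl.
Qed.

Lemma rank_le m u u' :
  (forall v, descent m v u' -> descent m v u) -> ole (rank m u') (rank m u).
Proof.
move=> H; rewrite [rank m u']rank_eq; apply: ole_limiting => [[|n]].
- by rewrite rank_eq; apply: (@ole_cocone _ _ 0); apply: ole_refl.
- case: (unpickle n) => [v|]; last by constructor.
  case: excluded_middle_informative => Hv; [exact: rank_lt (H _ Hv) | constructor].
Qed.

Lemma exit_sup_le_rank m u : ole (exit_sup m) (rank m u).
Proof. by rewrite rank_eq; apply: (@ole_cocone _ _ 0); apply: ole_refl. Qed.

Lemma descent_parent m v u c : S u -> (forall j, t u = Some (Pl j) -> m <= j) ->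
  descent m v (rcons u c) -> descent m v u.
Proof.
move=> Su Hj [Lm _ Sv [w [_ E Hmin [q qw Eq]]]]; split => //.
exists (c :: w); split => //; first by rewrite E -cats1 -catA.
- by case=> [|n] j /=; [rewrite cats0 => _; apply: Hj | rewrite -cat_rcons; apply: Hmin].
- by exists q.+1; rewrite //= -cat_rcons.
Qed.

Lemma rank_parent m u c : S u -> (forall j, t u = Some (Pl j) -> m <= j) ->
  ole (rank m (rcons u c)) (rank m u).
Proof. by move=> Su Hj; apply: rank_le => v; apply: descent_parent. Qed.

Definition bound (u : seq nat) : nat -> Ord :=
  fun m => if m <= l then th m else rank m u.

Lemma bound_parent u c : S u -> (forall j, t u <> Some (Pl j)) ->
  lexle L (bound (rcons u c)) (bound u).
Proof.
move=> Su nPl; apply: lexle_pointwise => m _; rewrite /bound.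
by case: (m <= l); [apply: ole_refl | apply: rank_parent => // j /nPl].
Qed.

Lemma exit_le_bound u c v :
  not_reachable P t S u c -> sig_leq i k P (sg (subtree t (rcons u c))) (Some (bound v)).
Proof.
move=> Hnr; have := exit_bounded Hnr; case Ex: (sg _) => [x|] //= /lex_leP Hx.
move=> j Lj Hag; rewrite /bound; case: (leqP j l) => [jl|lj].
  apply: Hx => [|m /andP [Lm ml] mj]; first by rewrite Lj jl.
  by move: (Hag m Lm mj); rewrite /bound ml.
apply/olt_ole/(ole_trans _ (exit_sup_le_rank j v)).
apply: (@ole_cocone _ _ (pickle (rcons u c))); rewrite pickleK.
by case: decP => [_|[]]; [rewrite Ex; apply: ole_refl | exists u, c].
Qed.

(* A prefixed point of the signature operator that is at most [bound u] at
   every [t|u] with [u] in [S]. *)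
Definition candidate_value (r : tree) (x : nat -> Ord) : Prop :=
  sg r = Some x \/ exists2 u, S u & subtree t u = r /\ x = bound u.

Definition candidate (r : tree) : sig :=
  if sg r is Some _ then Some (least_tuple i k P (candidate_value r)) else None.

Lemma candidate_spec r a : sg r = Some a ->
  [/\ candidate r = Some (least_tuple i k P (candidate_value r)),
      candidate_value r (least_tuple i k P (candidate_value r))
    & forall y, candidate_value r y -> lexle L (least_tuple i k P (candidate_value r)) y].
Proof.
move=> E; have Ha : candidate_value r a by left.
by case: (least_tupleP i k P Ha) => H1 H2; rewrite /candidate E.
Qed.

Lemma candidate_same_domain : same_domain i k sg candidate.
Proof. by move=> r _; rewrite /candidate; case: (sg r). Qed.

Lemma candidate_le_sg r : sig_leq i k P (candidate r) (sg r).
Proof.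
case E: (sg r) => [a|]; last by rewrite /candidate E.
by case: (candidate_spec E) => -> _ /(_ a) H; apply: H; left.
Qed.

Lemma candidate_le_bound u : S u -> sig_leq i k P (candidate (subtree t u)) (Some (bound u)).
Proof.
move=> Su; case E: (sg _) (S_sig_defined Su) => [a|] // _.
by case: (candidate_spec E) => -> _; apply; right; exists u.
Qed.

Lemma step_candidate_prio u j : S u -> t u = Some (Pl j) ->
  sig_leq i k P (step i k P candidate (subtree t u)) (Some (bound u)).
Proof.
move=> Su Et; rewrite step_subtree Et.
have lj : l < j by rewrite ltnNge; apply/negP => /(proj2 (S_labels Su) j); apply.
have [c Suc] : exists c, S (rcons u c) by case: hS => _ [_ [_ [/(_ u Su) ? _]]].
have c0 : c = 0 by have := child_lt Htree Et (S_dom Suc); case: c {Suc}.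
subst c; have := candidate_le_bound Suc; case: (candidate _) => //= x Hx.
apply: lexle_trans (@succ_at_mono i k P j _ _ Hx) _; apply: lexle_pointwise => m Lm.
have up : m <= j -> ole (rank m (rcons u 0)) (rank m u).
  by move=> mj; apply: rank_parent => // j'; rewrite Et => -[<-].
rewrite /succ_at /bound; case: (ltngtP m j) => [mj|jm|mj].
- by case: (m <= l); [apply: ole_refl | apply/up/ltnW].
- by rewrite andbF; constructor.
- subst m; rewrite andbT Lm leqNgt lj; apply: rank_lt; split => //.
  exists [:: 0]; split => //; first by rewrite cats1.
  + by case=> [|n] j' //= _; rewrite cats0 Et => -[<-].
  + by exists 0; rewrite //= cats0.
Qed.

Lemma step_candidate_own u : S u -> t u = Some (C P) ->
  sig_leq i k P (step i k P candidate (subtree t u)) (Some (bound u)).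
Proof.
move=> Su Et; rewrite step_subtree Et owned_P.
case: hS => _ [_ [_ [_ choice]]].
have [c [Suc _]] := choice u Su (proj2 (S_controlled Su) Et).
have : sig_leq i k P (candidate (subtree t (rcons u c))) (Some (bound u)).
  by apply: sig_leq_trans (candidate_le_bound Suc) _; apply: bound_parent => // j; rewrite Et.
have := child_lt Htree Et (S_dom Suc).
case: c {Suc} => [|[|]] // _ Hc; apply: sig_leq_trans Hc.
- exact: min_sig_lel.
- exact: min_sig_ler.
Qed.

Lemma step_candidate_opponent u : S u -> t u = Some (C (opp P)) ->
  sig_leq i k P (step i k P candidate (subtree t u)) (Some (bound u)).
Proof.
move=> Su Et; rewrite step_subtree Et owned_opp.
have child_le c : c < 2 -> sig_leq i k P (candidate (subtree t (rcons u c))) (Some (bound u)).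
  move=> c2; case: (classic (S (rcons u c))) => Suc.
    by apply: sig_leq_trans (candidate_le_bound Suc) _; apply: bound_parent => // j; rewrite Et.
  apply: sig_leq_trans (candidate_le_sg _) (exit_le_bound _ _).
  do !split => //; first by exists (opp P).
  by move/(S_controlled Su); rewrite Et => -[]; case: P.
by apply: max_sig_lub; apply: child_le.
Qed.

Lemma step_candidate_le_bound u : S u ->
  sig_leq i k P (step i k P candidate (subtree t u)) (Some (bound u)).
Proof.
move=> Su; case Et: (t u) => [[j||Q]|]; last by case: (S_dom Su).
- exact: step_candidate_prio Et.
- by case: (S_labels Su) => /(_ Et).
- case: (player_cases P Q) => EQ; rewrite EQ in Et.
  + exact: step_candidate_own.
  + exact: step_candidate_opponent.
Qed.

Lemma candidate_prefixed : prefixed i k P sg candidate.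
Proof.
split=> [|r Hr]; first exact: candidate_same_domain.
case E: (sg r) => [a|]; last by rewrite /sig_op /candidate E.
case: (candidate_spec E) => -> [Ea|[u Su [Er ->]]] _.
- have sg_domain : same_domain i k sg sg by move=> ? _.
  apply: sig_leq_trans (sig_op_mono Hr candidate_same_domain sg_domain _) _.
    by move=> s _; apply: candidate_le_sg.
  by rewrite -Ea; apply: (proj2 (sg_prefixed (proj1 hsg))).
- by rewrite /sig_op E -Er; move: (step_candidate_le_bound Su); case: (step _ _ _ _ _).
Qed.

Lemma sigma_le_bound : sig_leq i k P (sg t) (Some (bound [::])).
Proof.
apply: sig_leq_trans (is_sigma_le_prefixed hsg candidate_prefixed Ht) _.
by rewrite -{1}(subtree_nil t); apply: candidate_le_bound; case: hS.
Qed.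

End PartialStrategy.

Theorem mainTheorem12 (i k : nat) (hik : i < k) (P : player)
  (sg : tree -> sig) (hsg : is_sigma i k P sg)
  (t : tree) (ht : W i k P t)
  (l : nat) (hl : losing i k P l) (th : nat -> Ord)
  (S : seq nat -> Prop) (hS : partial_strategy P t S)
  (h1 : forall u, S u ->
          t u <> Some Sw /\ (forall j, j <= l -> t u <> Some (Pl j)))
  (h2 : forall b, (forall n, S (pref b n)) -> won_by i k t P b)
  (h3 : forall u c, not_reachable P t S u c ->
          sig_restr_le i k P l (sg (subtree t (rcons u c))) th) :
  sig_restr_le i k P l (sg t) th.
Proof.
have := sigma_le_bound hsg (proj1 ht) hS h1 h2 h3; rewrite /sig_restr_le.
case: (sg t) => // a /= /(@lexle_initial _ _ _ l) Ha; apply/lex_leP.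
by apply: lexle_oeqr Ha _ => m /andP [_ ml]; rewrite /bound ml; apply: oeq_refl.
Qed.
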